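(* Let $(D,T,K,v,k,v_0)$ be a skew warping on a skew bicategory $\mathcal B$. Then there is a skew bicategory $\mathcal B_T$ with the same objects as $\mathcal B$, hom-categories $\mathcal B_T(X,Y)=\mathcal B(X,DY)$, composition of $f\colon X\to DY$ and $g\colon Y\to DZ$ given by $Tg\cdot f$ (functorially, via $T\times 1$ followed by composition in $\mathcal B$), identity on $X$ given by $K_X$, associativity constraint $\alpha\circ(v_{h,g}\cdot f)\colon T(Th\cdot g)\cdot f\to Th\cdot(Tg\cdot f)$, left unit constraint $\lambda_f\circ(v_{0,Y}\cdot f)\colon TK_Y\cdot f\to f$, and right unit constraint $k_f\colon f\to Tf\cdot K_X$. Moreover, for each $n\in\{1,\dots,5\}$, axiom (B$n$) for $\mathcal B_T$ follows from axiom (B$n$) for $\mathcal B$ together with axiom (W$n$) for the skew warping.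
   Context: Notation: for 1-cells $f\colon X\to Y$, $g\colon Y\to Z$ write $g\cdot f$ for their composite, $1$ for identity 1-cells, and $\theta\cdot f$, $g\cdot\theta$ for whiskerings. A skew bicategory $\mathcal B$ consists of objects; hom-categories $\mathcal B(X,Y)$; composition functors; identity 1-cells; and natural (not necessarily invertible) 2-cells $\alpha_{f,g,h}\colon (h\cdot g)\cdot f\to h\cdot(g\cdot f)$, $\lambda_f\colon 1\cdot f\to f$, $\rho_f\colon f\to f\cdot 1$, subject to: (B1) $(k\cdot\alpha_{f,g,h})\circ\alpha_{f,h\cdot g,k}\circ(\alpha_{g,h,k}\cdot f)=\alpha_{g\cdot f,h,k}\circ\alpha_{f,g,k\cdot h}$; (B2) $(g\cdot\lambda_f)\circ\alpha_{f,1,g}\circ(\rho_g\cdot f)=1_{g\cdot f}$; (B3) $\lambda_{g\cdot f}\circ\alpha_{f,g,1}=\lambda_g\cdot f$; (B4) $\alpha_{1,f,g}\circ\rho_{g\cdot f}=g\cdot\rho_f$; (B5) $\lambda_1\circ\rho_1=1_{1}$. A skew warping on $\mathcal B$ consists of: a function $D$ on objects; functors $T\colon\mathcal B(X,DY)\to\mathcal B(DX,DY)$; 1-cells $K_X\colon X\to DX$; natural 2-cells $v_{g,f}\colon T(Tg\cdot f)\to Tg\cdot Tf$ ($f\colon X\to DY$, $g\colon Y\to DZ$), $k_f\colon f\to Tf\cdot K_X$, and 2-cells $v_{0,Y}\colon TK_Y\to 1_{DY}$, such that for all $f\colon X\to DY$, $g\colon Y\to DZ$, $h\colon Z\to DW$: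 (W1) $\alpha\circ(v_{h,g}\cdot Tf)\circ v_{Th\cdot g,f}=(Th\cdot v_{g,f})\circ v_{h,Tg\cdot f}\circ T(\alpha)\circ T(v_{h,g}\cdot f)$; (W2) $(Tf\cdot v_{0,X})\circ v_{f,K_X}\circ T(k_f)=\rho_{Tf}$; (W3) $\lambda_{Tf}\circ(v_{0,Y}\cdot Tf)\circ v_{K_Y,f}=T(\lambda_f)\circ T(v_{0,Y}\cdot f)$; (W4) $\alpha\circ(v_{g,f}\cdot K_X)\circ k_{Tg\cdot f}=Tg\cdot k_f$; (W5) $\lambda_{K_X}\circ(v_{0,X}\cdot K_X)\circ k_{K_X}=1_{K_X}$. *)

Record Bicat : Type := {
  ob : Type;
  hom : ob -> ob -> Type;
  cell : forall X Y : ob, hom X Y -> hom X Y -> Type;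
  vid : forall (X Y : ob) (f : hom X Y), cell X Y f f;
  vcomp : forall (X Y : ob) (f g h : hom X Y),
      cell X Y g h -> cell X Y f g -> cell X Y f h;
  comp : forall X Y Z, hom Y Z -> hom X Y -> hom X Z;
  hcomp : forall (X Y Z : ob) (g g' : hom Y Z) (f f' : hom X Y),
      cell Y Z g g' -> cell X Y f f' ->
      cell X Z (comp X Y Z g f) (comp X Y Z g' f');
  id1 : forall X, hom X X;
  assoc : forall (W X Y Z : ob) (f : hom W X) (g : hom X Y) (h : hom Y Z),
      cell W Z (comp W X Z (comp X Y Z h g) f) (comp W Y Z h (comp W X Y g f));
  lunit : forall (X Y : ob) (f : hom X Y), cell X Y (comp X Y Y (id1 Y) f) f;
  runit : forall (X Y : ob) (f : hom X Y), cell X Y f (comp X X Y f (id1 X))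
}.

Arguments hom {_} _ _.
Arguments cell {_ _ _} _ _.
Arguments vid {_ _ _} _.
Arguments vcomp {_ _ _ _ _ _} _ _.
Arguments comp {_ _ _ _} _ _.
Arguments hcomp {_ _ _ _ _ _ _ _} _ _.
Arguments id1 {_} _.
Arguments assoc {_ _ _ _ _} _ _ _.
Arguments lunit {_ _ _} _.
Arguments runit {_ _ _} _.

Definition rwhisk {B : Bicat} {X Y Z : ob B} {g g' : hom Y Z}
  (th : cell g g') (f : hom X Y) : cell (comp g f) (comp g' f) :=
  hcomp th (vid f).
Definition lwhisk {B : Bicat} {X Y Z : ob B} (g : hom Y Z) {f f' : hom X Y}
  (th : cell f f') : cell (comp g f) (comp g f') :=
  hcomp (vid g) th.

Record IsBicatStructure (B : Bicat) : Prop := {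
  vcomp_id_l : forall (X Y : ob B) (f g : hom X Y) (a : cell f g), vcomp (vid g) a = a;
  vcomp_id_r : forall (X Y : ob B) (f g : hom X Y) (a : cell f g), vcomp a (vid f) = a;
  vcomp_assoc : forall (X Y : ob B) (f g h i : hom X Y) (c : cell h i) (b : cell g h) (a : cell f g),
      vcomp c (vcomp b a) = vcomp (vcomp c b) a;
  hcomp_id : forall (X Y Z : ob B) (g : hom Y Z) (f : hom X Y),
      hcomp (vid g) (vid f) = vid (comp g f);
  hcomp_vcomp : forall (X Y Z : ob B) (g1 g2 g3 : hom Y Z) (f1 f2 f3 : hom X Y)
      (b2 : cell g2 g3) (b1 : cell g1 g2) (a2 : cell f2 f3) (a1 : cell f1 f2),
      hcomp (vcomp b2 b1) (vcomp a2 a1) = vcomp (hcomp b2 a2) (hcomp b1 a1);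
  assoc_nat : forall (W X Y Z : ob B) (f f' : hom W X) (g g' : hom X Y) (h h' : hom Y Z)
      (a : cell f f') (b : cell g g') (c : cell h h'),
      vcomp (hcomp c (hcomp b a)) (assoc f g h) = vcomp (assoc f' g' h') (hcomp (hcomp c b) a);
  lunit_nat : forall (X Y : ob B) (f f' : hom X Y) (a : cell f f'),
      vcomp a (lunit f) = vcomp (lunit f') (hcomp (vid (id1 Y)) a);
  runit_nat : forall (X Y : ob B) (f f' : hom X Y) (a : cell f f'),
      vcomp (runit f') a = vcomp (hcomp a (vid (id1 X))) (runit f)
}.

Definition AxB1 (B : Bicat) : Prop :=
  forall (V W X Y Z : ob B) (f : hom V W) (g : hom W X) (h : hom X Y) (k : hom Y Z),
    vcomp (lwhisk k (assoc f g h)) (vcomp (assoc f (comp h g) k) (rwhisk (assoc g h k) f))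
    = vcomp (assoc (comp g f) h k) (assoc f g (comp k h)).

Definition AxB2 (B : Bicat) : Prop :=
  forall (X Y Z : ob B) (f : hom X Y) (g : hom Y Z),
    vcomp (lwhisk g (lunit f)) (vcomp (assoc f (id1 Y) g) (rwhisk (runit g) f))
    = vid (comp g f).

Definition AxB3 (B : Bicat) : Prop :=
  forall (X Y Z : ob B) (f : hom X Y) (g : hom Y Z),
    vcomp (lunit (comp g f)) (assoc f g (id1 Z)) = rwhisk (lunit g) f.

Definition AxB4 (B : Bicat) : Prop :=
  forall (X Y Z : ob B) (f : hom X Y) (g : hom Y Z),
    vcomp (assoc (id1 X) f g) (runit (comp g f)) = lwhisk g (runit f).

Definition AxB5 (B : Bicat) : Prop :=
  forall X : ob B, vcomp (lunit (id1 X)) (runit (id1 X)) = vid (id1 X).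

Definition IsSkewBicat (B : Bicat) : Prop :=
  IsBicatStructure B /\ AxB1 B /\ AxB2 B /\ AxB3 B /\ AxB4 B /\ AxB5 B.

Record Warping (B : Bicat) : Type := {
  wD : ob B -> ob B;
  wT : forall X Y : ob B, hom X (wD Y) -> hom (wD X) (wD Y);
  wT2 : forall (X Y : ob B) (f f' : hom X (wD Y)), cell f f' -> cell (wT X Y f) (wT X Y f');
  wK : forall X : ob B, hom X (wD X);
  wv : forall (X Y Z : ob B) (g : hom Y (wD Z)) (f : hom X (wD Y)),
      cell (wT X Z (comp (wT Y Z g) f)) (comp (wT Y Z g) (wT X Y f));
  wk : forall (X Y : ob B) (f : hom X (wD Y)), cell f (comp (wT X Y f) (wK X));
  wv0 : forall Y : ob B, cell (wT Y Y (wK Y)) (id1 (wD Y))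
}.

Arguments wD {_} _ _.
Arguments wT {_} _ {_ _} _.
Arguments wT2 {_} _ {_ _ _ _} _.
Arguments wK {_} _ _.
Arguments wv {_} _ {_ _ _} _ _.
Arguments wk {_} _ {_ _} _.
Arguments wv0 {_} _ _.

Record IsWarpingStructure (B : Bicat) (w : Warping B) : Prop := {
  T_id : forall (X Y : ob B) (f : hom X (wD w Y)), wT2 w (vid f) = vid (wT w f);
  T_comp : forall (X Y : ob B) (f g h : hom X (wD w Y)) (b : cell g h) (a : cell f g),
      wT2 w (vcomp b a) = vcomp (wT2 w b) (wT2 w a);
  v_nat : forall (X Y Z : ob B) (g g' : hom Y (wD w Z)) (f f' : hom X (wD w Y))
      (b : cell g g') (a : cell f f'),
      vcomp (hcomp (wT2 w b) (wT2 w a)) (wv w g f)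
      = vcomp (wv w g' f') (wT2 w (hcomp (wT2 w b) a));
  k_nat : forall (X Y : ob B) (f f' : hom X (wD w Y)) (a : cell f f'),
      vcomp (hcomp (wT2 w a) (vid (wK w X))) (wk w f) = vcomp (wk w f') a
}.

Definition AxW1 (B : Bicat) (w : Warping B) : Prop :=
  forall (X Y Z W : ob B) (f : hom X (wD w Y)) (g : hom Y (wD w Z)) (h : hom Z (wD w W)),
    vcomp (assoc (wT w f) (wT w g) (wT w h))
          (vcomp (rwhisk (wv w h g) (wT w f)) (wv w (comp (wT w h) g) f))
    = vcomp (lwhisk (wT w h) (wv w g f))
        (vcomp (wv w h (comp (wT w g) f))
           (vcomp (wT2 w (assoc f (wT w g) (wT w h)))
                  (wT2 w (rwhisk (wv w h g) f)))).

Definition AxW2 (B : Bicat) (w : Warping B) : Prop :=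
  forall (X Y : ob B) (f : hom X (wD w Y)),
    vcomp (lwhisk (wT w f) (wv0 w X)) (vcomp (wv w f (wK w X)) (wT2 w (wk w f)))
    = runit (wT w f).

Definition AxW3 (B : Bicat) (w : Warping B) : Prop :=
  forall (X Y : ob B) (f : hom X (wD w Y)),
    vcomp (lunit (wT w f)) (vcomp (rwhisk (wv0 w Y) (wT w f)) (wv w (wK w Y) f))
    = vcomp (wT2 w (lunit f)) (wT2 w (rwhisk (wv0 w Y) f)).

Definition AxW4 (B : Bicat) (w : Warping B) : Prop :=
  forall (X Y Z : ob B) (f : hom X (wD w Y)) (g : hom Y (wD w Z)),
    vcomp (assoc (wK w X) (wT w f) (wT w g))
          (vcomp (rwhisk (wv w g f) (wK w X)) (wk w (comp (wT w g) f)))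
    = lwhisk (wT w g) (wk w f).

Definition AxW5 (B : Bicat) (w : Warping B) : Prop :=
  forall X : ob B,
    vcomp (lunit (wK w X)) (vcomp (rwhisk (wv0 w X) (wK w X)) (wk w (wK w X)))
    = vid (wK w X).

Definition IsSkewWarping (B : Bicat) (w : Warping B) : Prop :=
  IsWarpingStructure B w /\ AxW1 B w /\ AxW2 B w /\ AxW3 B w /\ AxW4 B w /\ AxW5 B w.

Definition warp (B : Bicat) (w : Warping B) : Bicat := {|
  ob := ob B;
  hom := fun X Y => @hom B X (wD w Y);
  cell := fun X Y f g => @cell B X (wD w Y) f g;
  vid := fun X Y f => vid f;
  vcomp := fun X Y f g h b a => vcomp b a;
  comp := fun X Y Z g f => comp (wT w g) f;
  hcomp := fun X Y Z g g' f f' b a => hcomp (wT2 w b) a;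
  id1 := fun X => wK w X;
  assoc := fun V X Y Z f g h =>
    vcomp (assoc f (wT w g) (wT w h)) (rwhisk (wv w h g) f);
  lunit := fun X Y f => vcomp (lunit f) (rwhisk (wv0 w Y) f);
  runit := fun X Y f => wk w f
|}.


(* Each constraint of B_T is a constraint of B composed with a whiskered
   component of v, v_0 or k.  Naturality of alpha lets these components slide
   past the constraints of B, after which each (Bn) for B_T splits into an
   instance of (Bn) for B and a whiskered instance of (Wn). *)

Section BicatStructure.
Variable B : Bicat.
Hypothesis HB : IsBicatStructure B.

Lemma vcomp1l {X Y : ob B} {f g : hom X Y} (a : cell f g) : vcomp (vid g) a = a.
Proof. exact (vcomp_id_l B HB _ _ _ _ a). Qed.

Lemma vcomp1r {X Y : ob B} {f g : hom X Y} (a : cell f g) : vcomp a (vid f) = a.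
Proof. exact (vcomp_id_r B HB _ _ _ _ a). Qed.

Lemma vcompA {X Y : ob B} {f g h i : hom X Y} (c : cell h i) (b : cell g h) (a : cell f g) :
  vcomp c (vcomp b a) = vcomp (vcomp c b) a.
Proof. exact (vcomp_assoc B HB _ _ _ _ _ _ c b a). Qed.

Lemma hcomp_vid {X Y Z : ob B} (g : hom Y Z) (f : hom X Y) :
  hcomp (vid g) (vid f) = vid (comp g f).
Proof. exact (hcomp_id B HB _ _ _ g f). Qed.

Lemma interchange {X Y Z : ob B} {g1 g2 g3 : hom Y Z} {f1 f2 f3 : hom X Y}
    (b2 : cell g2 g3) (b1 : cell g1 g2) (a2 : cell f2 f3) (a1 : cell f1 f2) :
  hcomp (vcomp b2 b1) (vcomp a2 a1) = vcomp (hcomp b2 a2) (hcomp b1 a1).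
Proof. exact (hcomp_vcomp B HB _ _ _ _ _ _ _ _ _ b2 b1 a2 a1). Qed.

Lemma rwhisk_vcomp {X Y Z : ob B} {g1 g2 g3 : hom Y Z} (b : cell g2 g3) (a : cell g1 g2)
    (f : hom X Y) :
  rwhisk (vcomp b a) f = vcomp (rwhisk b f) (rwhisk a f).
Proof. unfold rwhisk. rewrite <- interchange, vcomp1l. reflexivity. Qed.

Lemma lwhisk_vcomp {X Y Z : ob B} (g : hom Y Z) {f1 f2 f3 : hom X Y} (b : cell f2 f3)
    (a : cell f1 f2) :
  lwhisk g (vcomp b a) = vcomp (lwhisk g b) (lwhisk g a).
Proof. unfold lwhisk. rewrite <- interchange, vcomp1l. reflexivity. Qed.

Lemma assoc_nat_h {W X Y Z : ob B} (f : hom W X) (g : hom X Y) {h h' : hom Y Z}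
    (c : cell h h') :
  vcomp (rwhisk c (comp g f)) (assoc f g h) = vcomp (assoc f g h') (rwhisk (rwhisk c g) f).
Proof. unfold rwhisk. rewrite <- (hcomp_vid g f). apply (assoc_nat B HB). Qed.

Lemma assoc_nat_g {W X Y Z : ob B} (f : hom W X) {g g' : hom X Y} (h : hom Y Z)
    (b : cell g g') :
  vcomp (lwhisk h (rwhisk b f)) (assoc f g h) = vcomp (assoc f g' h) (rwhisk (lwhisk h b) f).
Proof. apply (assoc_nat B HB). Qed.

Section Warping.
Variable w : Warping B.
Hypothesis HW : IsWarpingStructure B w.

Lemma wT2_vid {X Y : ob B} (f : hom X (wD w Y)) : wT2 w (vid f) = vid (wT w f).
Proof. exact (T_id B w HW _ _ f). Qed.

Lemma wT2_vcomp {X Y : ob B} {f g h : hom X (wD w Y)} (b : cell g h) (a : cell f g) :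
  wT2 w (vcomp b a) = vcomp (wT2 w b) (wT2 w a).
Proof. exact (T_comp B w HW _ _ _ _ _ b a). Qed.

Lemma warp_rwhisk {X Y Z : ob B} {g g' : hom Y (wD w Z)} (th : cell g g') (f : hom X (wD w Y)) :
  @rwhisk (warp B w) X Y Z g g' th f = rwhisk (wT2 w th) f.
Proof. reflexivity. Qed.

Lemma warp_lwhisk {X Y Z : ob B} (g : hom Y (wD w Z)) {f f' : hom X (wD w Y)} (th : cell f f') :
  @lwhisk (warp B w) X Y Z g f f' th = lwhisk (wT w g) th.
Proof. unfold lwhisk; cbn. rewrite wT2_vid. reflexivity. Qed.

Lemma warp_AxB1 : AxB1 B -> AxW1 B w -> AxB1 (warp B w).
Proof.
  intros B1 W1 V W X Y Z f g h k. unfold AxB1, AxW1 in *.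
  rewrite warp_lwhisk, warp_rwhisk; cbn.
  (* Slide v_{k,h} past alpha, merge the two alphas by (B1), rewrite the part
     whiskered by f with (W1), and slide v_{h,g} back out of the whisker. *)
  rewrite <- !vcompA.
  rewrite (vcompA (rwhisk (wv w k h) _)), assoc_nat_h, <- vcompA.
  rewrite (vcompA (assoc _ _ _) (assoc _ _ _)), <- B1, <- !vcompA, <- !rwhisk_vcomp, W1.
  rewrite !wT2_vcomp, !rwhisk_vcomp, lwhisk_vcomp, <- !vcompA.
  rewrite (vcompA (assoc _ _ _) (rwhisk (lwhisk _ _) _)), <- assoc_nat_g, <- !vcompA.
  reflexivity.
Qed.

Lemma warp_AxB2 : AxB2 B -> AxW2 B w -> AxB2 (warp B w).
Proof.
  intros B2 W2 X Y Z f g. unfold AxB2, AxW2 in *.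
  rewrite warp_lwhisk, warp_rwhisk; cbn.
  rewrite <- B2, <- W2, !rwhisk_vcomp, lwhisk_vcomp, <- !vcompA.
  rewrite (vcompA (lwhisk _ (rwhisk _ _))), assoc_nat_g, <- !vcompA.
  reflexivity.
Qed.

Lemma warp_AxB3 : AxB3 B -> AxW3 B w -> AxB3 (warp B w).
Proof.
  intros B3 W3 X Y Z f g. unfold AxB3, AxW3 in *.
  rewrite warp_rwhisk; cbn.
  rewrite wT2_vcomp, <- W3, !rwhisk_vcomp, <- B3, <- !vcompA.
  rewrite (vcompA (rwhisk _ (comp _ _))), assoc_nat_h, <- !vcompA.
  reflexivity.
Qed.

Lemma warp_AxB4 : AxW4 B w -> AxB4 (warp B w).
Proof.
  intros W4 X Y Z f g. unfold AxB4, AxW4 in *.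
  rewrite warp_lwhisk; cbn.
  rewrite <- vcompA. apply W4.
Qed.

Lemma warp_AxB5 : AxW5 B w -> AxB5 (warp B w).
Proof.
  intros W5 X. unfold AxB5, AxW5 in *; cbn.
  rewrite <- vcompA. apply W5.
Qed.

Lemma warp_IsBicatStructure : IsBicatStructure (warp B w).
Proof.
  constructor; cbn.
  - intros; apply vcomp1l.
  - intros; apply vcomp1r.
  - intros; apply vcompA.
  - intros; rewrite wT2_vid; apply hcomp_vid.
  - intros; rewrite wT2_vcomp; apply interchange.
  - intros W X Y Z f f' g g' h h' a b c.
    rewrite vcompA, (assoc_nat B HB), <- !vcompA. f_equal.
    unfold rwhisk. rewrite <- !interchange, vcomp1l, vcomp1r, (v_nat B w HW).
    reflexivity.
  - intros X Y f f' a.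
    rewrite vcompA, (lunit_nat B HB), <- !vcompA. f_equal.
    unfold rwhisk. rewrite <- !interchange, !vcomp1l, !vcomp1r, wT2_vid, vcomp1r.
    reflexivity.
  - intros X Y f f' a. symmetry. apply (k_nat B w HW).
Qed.
End Warping.
End BicatStructure.

Theorem mainTheorem2 (B : Bicat) (w : Warping B) :
  (IsSkewBicat B -> IsSkewWarping B w -> IsSkewBicat (warp B w)) /\
  (IsBicatStructure B -> IsWarpingStructure B w ->
     IsBicatStructure (warp B w) /\
     (AxB1 B -> AxW1 B w -> AxB1 (warp B w)) /\
     (AxB2 B -> AxW2 B w -> AxB2 (warp B w)) /\
     (AxB3 B -> AxW3 B w -> AxB3 (warp B w)) /\
     (AxB4 B -> AxW4 B w -> AxB4 (warp B w)) /\
     (AxB5 B -> AxW5 B w -> AxB5 (warp B w))).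
Proof.
  split.
  - intros (HB & B1 & B2 & B3 & _ & _) (HW & W1 & W2 & W3 & W4 & W5).
    refine (conj _ (conj _ (conj _ (conj _ (conj _ _))))).
    + exact (warp_IsBicatStructure B HB w HW).
    + exact (warp_AxB1 B HB w HW B1 W1).
    + exact (warp_AxB2 B HB w HW B2 W2).
    + exact (warp_AxB3 B HB w HW B3 W3).
    + exact (warp_AxB4 B HB w HW W4).
    + exact (warp_AxB5 B HB w W5).
  - intros HB HW.
    refine (conj _ (conj _ (conj _ (conj _ (conj _ _))))).
    + exact (warp_IsBicatStructure B HB w HW).
    + exact (warp_AxB1 B HB w HW).
    + exact (warp_AxB2 B HB w HW).
    + exact (warp_AxB3 B HB w HW).
    + intros _. exact (warp_AxB4 B HB w HW).
    + intros _. exact (warp_AxB5 B HB w).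
Qed.
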